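(* Let $G=(V,E)$ be a finite tree, fix a vertex $i\in V$, and let $\phi:V\to\mathbb{R}_{\ge 0}$ be defined as below. Then for every starting vertex $j\in V$, the path $x_0=j,x_1,x_2,\dots$ produced by the descent rule (at each step $x_{k+1}$ is a neighbor of $x_k$ at which $\phi$ is minimal among all neighbors of $x_k$, continuing until $x_k=i$) is the shortest path from $j$ to $i$ in $G$, i.e. it has length equal to the graph distance $d(j,i)$, regardless of how ties are broken.
   Context: $L=D-A$ is the Laplacian matrix of $G$ ($D$ diagonal with $D_{vv}=\deg_G(v)$, $A$ the adjacency matrix). Let $C_1,\dots,C_m$ be the connected components of $G-i$ (the graph with $i$ and its incident edges deleted), and let $L_{C_k}$ denote the principal submatrix of $L$ indexed by the vertices of $C_k$ (with degrees taken in $G$). The function $\phi$ is defined by $\phi(i)=0$ and, on each $C_k$, $\phi$ equals a strictly positive eigenvector of $L_{C_k}$ associated with its smallest eigenvalue (this eigenvalue is positive and simple, and such a positive eigenvector exists and is unique up to positive scaling). *)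

From HB Require Import structures.
From mathcomp Require Import all_boot all_order all_algebra.
From mathcomp Require Import reals.
Set Implicit Arguments. Unset Strict Implicit. Unset Printing Implicit Defensive.
Import Order.TTheory GRing.Theory Num.Theory.
Local Open Scope ring_scope.

Section Defs.
Variable V : finType.
Variable e : rel V.

Definition is_simple_graph : Prop := symmetric e /\ irreflexive e.
Definition is_connected : Prop := forall x y : V, connect e x y.
Definition is_acyclic : Prop :=
  forall s : seq V, uniq s -> (3 <= size s)%N -> ~~ cycle e s.
Definition is_tree : Prop := [/\ is_simple_graph, is_connected & is_acyclic].

Definition deg (v : V) : nat := #|[set u | e v u]|.

Definition laplacian (R : realType) (v u : V) : R :=
  if v == u then (deg v)%:R else if e v u then -1 else 0.

Definition del_rel (i : V) : rel V := fun x y => [&& e x y, x != i & y != i].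

Definition comp (i v : V) : {set V} :=
  [set u | (u != i) && connect (del_rel i) v u].

(* mu is an eigenvalue of the principal submatrix L_C of L indexed by C
   (vectors indexed by C are represented by functions V -> R, only their
   values on C matter) *)
Definition is_eigenpair_sub (R : realType) (C : {set V}) (mu : R) (f : V -> R) :
  Prop :=
  (exists w, w \in C /\ f w != 0) /\
  forall w, w \in C -> \sum_(u in C) laplacian R w u * f u = mu * f w.

Definition is_eigenvalue_sub (R : realType) (C : {set V}) (mu : R) : Prop :=
  exists f : V -> R, is_eigenpair_sub C mu f.

Definition is_smallest_eigenvalue_sub (R : realType) (C : {set V}) (lam : R) :
  Prop :=
  is_eigenvalue_sub C lam /\ forall mu : R, is_eigenvalue_sub C mu -> lam <= mu.

Definition is_phi (R : realType) (i : V) (phi : V -> R) : Prop :=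
  phi i = 0 /\
  forall v, v != i ->
    let C := comp i v in
    (forall u, u \in C -> 0 < phi u) /\
    exists lam : R, is_smallest_eigenvalue_sub C lam /\
      (forall w, w \in C -> \sum_(u in C) laplacian R w u * phi u = lam * phi w).

Definition is_dist (j i : V) (n : nat) : Prop :=
  (exists p : seq V, [/\ size p = n, path e j p & last j p = i]) /\
  forall p : seq V, path e j p -> last j p = i -> (n <= size p)%N.

Definition is_descent (R : realType) (phi : V -> R) (i j : V) (x : nat -> V) :
  Prop :=
  x 0%N = j /\
  forall k : nat, x k != i ->
    e (x k) (x k.+1) /\ forall y, e (x k) y -> phi (x k.+1) <= phi y.

End Defs.

From Pilot Require Import Defs.
From HB Require Import structures.
From mathcomp Require Import all_boot all_order all_algebra.
From mathcomp Require Import reals.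
From mathcomp Require Import zify lra.
Set Implicit Arguments. Unset Strict Implicit. Unset Printing Implicit Defensive.
Import Order.TTheory GRing.Theory Num.Theory.
Local Open Scope ring_scope.

(* Let d be the graph distance to the root i.  In a tree every vertex
   v <> i has exactly one neighbour with d = d v - 1 (its parent), and all
   its other neighbours are children with d = d v + 1.  The proof has three
   parts:
   1. distance: d is realised by a shortest walk, vanishes exactly at i and
      changes by exactly one along each edge; parents are unique because
      two distinct neighbours of v are separated in G - v (acyclicity);
   2. the eigenvalue lam of each branch C of G - i is positive: summing the
      eigen-equation over C, the Laplacian terms inside C cancel in pairs
      and what remains is the sum of phi over the neighbours of i in C;
   3. phi strictly increases from a parent to a child (induction from the
      leaves: at a child b, the row of the eigen-equation gives
      (phi b - phi parent) >= lam * phi b > 0 since the other neighbours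
      of b are children with larger phi).
   Hence a phi-minimising neighbour of v <> i is always its parent, so the
   descent decreases d by one at each step and reaches i after d j steps. *)

Lemma sumr_gt0_witness (R : numDomainType) (I : finType) (P : pred I)
    (F : I -> R) (c : I) :
  (forall w, P w -> 0 <= F w) -> P c -> 0 < F c -> 0 < \sum_(w | P w) F w.
Proof.
move=> F_ge0 Pc Fc_gt0; rewrite (bigD1 c) //=.
apply: ltr_wpDr Fc_gt0 => //; apply: sumr_ge0 => w /andP [Pw _]; exact: F_ge0.
Qed.

Section Tree.
Variables (V : finType) (e : rel V) (i : V).
Hypothesis e_sym : symmetric e.
Hypothesis e_irr : irreflexive e.
Hypothesis e_conn : is_connected e.
Hypothesis e_acyc : is_acyclic e.

Definition reaches (v : V) : pred nat :=
  fun n => [exists p : n.-tuple V, path e v p && (last v p == i)].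

Lemma reaches_some (v : V) : exists n, reaches v n.
Proof.
have /connectP [p p_path p_last] := e_conn v i.
by exists (size p); apply/existsP; exists (in_tuple p); rewrite /= p_path -p_last eqxx.
Qed.

Definition dist (v : V) : nat := ex_minn (reaches_some v).

Lemma dist_path (v : V) :
  exists p : seq V, [/\ size p = dist v, path e v p & last v p = i].
Proof.
rewrite /dist; case: ex_minnP => n /existsP [p /andP [p_path /eqP p_last]] _.
by exists p; rewrite size_tuple.
Qed.

Lemma dist_min (v : V) (p : seq V) :
  path e v p -> last v p = i -> (dist v <= size p)%N.
Proof.
move=> p_path p_last; rewrite /dist; case: ex_minnP => n _; apply.
by apply/existsP; exists (in_tuple p); rewrite /= p_path p_last eqxx.
Qed.

Lemma dist_is_dist (v : V) : is_dist e v i (dist v).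
Proof. by split; [exact: dist_path | exact: dist_min]. Qed.

Lemma dist_eq0 (v : V) : (dist v == 0)%N = (v == i).
Proof.
apply/idP/eqP => [/eqP dv0 | ->]; last by rewrite -leqn0 (@dist_min i [::]).
have [p [p_size _ <-]] := dist_path v.
by move: p_size; rewrite dv0 => /size0nil ->.
Qed.

Lemma dist_edge (v u : V) : e v u -> (dist v <= (dist u).+1)%N.
Proof.
move=> evu; have [p [p_size p_path p_last]] := dist_path u.
by rewrite -p_size (@dist_min v (u :: p)) //= evu.
Qed.

Lemma parent_exists (v : V) :
  v != i -> exists2 u, e v u & dist u = (dist v).-1.
Proof.
move=> vi; have [[|u p] [p_size p_path p_last]] := dist_path v.
  by move: vi; rewrite -p_last eqxx.
move: p_path => /= /andP [evu p_path]; exists u => //.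
have := dist_min p_path p_last; have := dist_edge evu; rewrite -p_size /=; lia.
Qed.

Lemma del_path_avoid (v a : V) (q : seq V) :
  path (del_rel e v) a q -> v \notin q.
Proof.
elim: q a => [|y q IHq] a //= /andP [/and3P [_ _ yv] q_path].
by rewrite in_cons negb_or eq_sym yv (IHq y).
Qed.

Lemma del_rel_sym (v : V) : symmetric (del_rel e v).
Proof. by move=> x y; rewrite /del_rel e_sym [(x != v) && _]andbC. Qed.

(* Removing v separates any two distinct neighbours of v: a path joining
   them in G - v would close a cycle through v. *)
Lemma neighbours_separated (v a b : V) :
  e v a -> e v b -> a != b -> ~~ connect (del_rel e v) a b.
Proof.
move=> eva evb ab; apply/negP => /connectP [p p_path b_last].
move: evb ab; rewrite {b}b_last.
case: (shortenP p_path) => q q_path q_uniq _ {p p_path} evb ab.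
have vq : v \notin a :: q.
  rewrite in_cons negb_or (del_path_avoid q_path) andbT.
  by apply: contraTneq eva => ->; rewrite e_irr.
have q_epath : path e a q by apply: sub_path q_path => x z /and3P [].
case: q q_path q_uniq vq ab evb q_epath => [|y q] _ q_uniq vq ab evb q_epath.
  by rewrite eqxx in ab.
have := e_acyc (s := [:: v, a, y & q]); rewrite cons_uniq vq q_uniq.
move=> /(_ isT isT) /negP; apply; rewrite /= eva /=.
by rewrite -[_ && _]/(path e a (rcons (y :: q) v)) rcons_path q_epath e_sym.
Qed.

Lemma closer_reaches_root (v a : V) :
  (dist a < dist v)%N -> connect (del_rel e v) a i.
Proof.
have [n] := ubnP (dist a); elim: n a => // n IHn a da_lt dav.
have [ai | ai] := eqVneq a i; first by rewrite ai connect0.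
have [u eau du] := parent_exists ai.
have da_pos : (0 < dist a)%N by rewrite lt0n dist_eq0.
apply: connect_trans (IHn u _ _); try lia.
apply: connect1; rewrite /del_rel eau /=.
by apply/andP; split; apply: contraTneq dav => <-; lia.
Qed.

(* Adjacent vertices are at different distances from the root: otherwise
   the walk through the parent of v, the root and the parent of u would
   join two neighbours of u in G - u. *)
Lemma edge_dist_neq (u v : V) : e u v -> dist u != dist v.
Proof.
move=> euv; apply/eqP => duv.
have ui : u != i.
  apply: contraTneq euv => ui.
  have /eqP vi : v == i by rewrite -dist_eq0 -duv ui dist_eq0 eqxx.
  by rewrite ui vi e_irr.
have vi : v != i by rewrite -dist_eq0 -duv dist_eq0.
have [pu eupu dpu] := parent_exists ui.
have [w evw dw] := parent_exists vi.
have du_pos : (0 < dist u)%N by rewrite lt0n dist_eq0.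
have v_pu : v != pu by apply/eqP => v_pu; move: dpu; rewrite -v_pu; lia.
apply/negP: (neighbours_separated euv eupu v_pu); rewrite negbK.
apply: (@connect_trans _ _ w).
  apply: connect1; rewrite /del_rel evw /=; apply/andP; split.
    by apply: contraTneq euv => ->; rewrite e_irr.
  by apply/eqP => wu; move: dw; rewrite wu; lia.
apply: (@connect_trans _ _ i); first by apply: closer_reaches_root; lia.
by rewrite (sym_connect_sym (@del_rel_sym u)); apply: closer_reaches_root; lia.
Qed.

Lemma edge_dist_cases (v u : V) :
  e v u -> dist u = (dist v).+1 \/ dist v = (dist u).+1.
Proof.
move=> evu; have := edge_dist_neq evu; have := dist_edge evu.
have := dist_edge (u := v) (v := u); rewrite e_sym => /(_ evu); lia.
Qed.

Lemma parent_unique (v a b : V) : v != i -> e v a -> e v b ->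
  dist a = (dist v).-1 -> dist b = (dist v).-1 -> a = b.
Proof.
move=> vi eva evb da db; apply: contraTeq (neighbours_separated eva evb) _.
have dv_pos : (0 < dist v)%N by rewrite lt0n dist_eq0.
apply: (@connect_trans _ _ i); first by apply: closer_reaches_root; lia.
by rewrite (sym_connect_sym (@del_rel_sym v)); apply: closer_reaches_root; lia.
Qed.

Lemma branch_meets_root (b : V) :
  b != i -> exists2 c, e c i & connect (del_rel e i) b c.
Proof.
have [n] := ubnP (dist b); elim: n b => // n IHn b db_lt bi.
have [u ebu du] := parent_exists bi.
have [ui | ui] := eqVneq u i; first by exists b; rewrite -?ui ?connect0.
have db_pos : (0 < dist b)%N by rewrite lt0n dist_eq0.
have [c eci uc] := IHn u ltac:(lia) ui.
exists c => //; apply: connect_trans uc; apply: connect1.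
by rewrite /del_rel ebu bi ui.
Qed.

(* [farther v] counts the vertices strictly farther from the root than v;
   it is the measure for induction from the leaves towards the root. *)
Definition farther (v : V) : nat := #|[set w | (dist v < dist w)%N]|.

Lemma farther_child (b u : V) : dist u = (dist b).+1 -> (farther u < farther b)%N.
Proof.
move=> du; apply: proper_card; apply/properP; split.
  by apply/subsetP => w; rewrite !inE du; lia.
by exists u; rewrite !inE du ?ltnn.
Qed.

Local Notation branch := (Defs.comp e i).

Lemma branch_self (b : V) : b != i -> b \in branch b.
Proof. by move=> bi; rewrite inE bi connect0. Qed.

Lemma branch_closed (b w u : V) :
  w \in branch b -> e w u -> u != i -> u \in branch b.
Proof.
rewrite !inE => /andP [wi bw] ewu ui; rewrite ui.
by apply: connect_trans bw (connect1 _); rewrite /del_rel ewu wi ui.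
Qed.

Variables (R : realType) (phi : V -> R).
Hypothesis phi_spec : is_phi e i phi.

(* The row of L_C at w applied to phi is the sum of the differences of phi
   along all edges at w: a neighbour outside C can only be the root, where
   phi vanishes. *)
Lemma laplacian_row (b w : V) : w \in branch b ->
  \sum_(u in branch b) laplacian e R w u * phi u = \sum_(u | e w u) (phi w - phi u).
Proof.
move=> wC; have phi_i := phi_spec.1.
have entry u : (if u \in branch b then laplacian e R w u * phi u else 0) =
    (if u == w then (deg e w)%:R * phi w else 0) - (if e w u then phi u else 0).
  have [->|uw] := eqVneq u w; first by rewrite wC /laplacian eqxx e_irr subr0.
  rewrite /laplacian eq_sym (negbTE uw) sub0r.
  case ewu: (e w u); first have [->|ui] := eqVneq u i.
  - by rewrite phi_i mulr0 if_same oppr0.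
  - by rewrite (branch_closed wC ewu ui) mulN1r.
  - by rewrite mul0r if_same oppr0.
rewrite big_mkcond (eq_bigr _ (fun u _ => entry u)) sumrB -!big_mkcond.
rewrite big_pred1_eq sumrB; congr (_ - _).
rewrite (@eq_bigl _ _ _ _ _ _ (fun u => u \in [set u | e w u])) => [|u].
  by rewrite sumr_const mulr_natl.
by rewrite inE.
Qed.

(* Summing the rows over a branch C: the contributions of edges inside C
   cancel in pairs, leaving phi at the vertices of C adjacent to i. *)
Lemma branch_flux (b : V) :
  \sum_(w in branch b) \sum_(u | e w u) (phi w - phi u) =
  \sum_(w in branch b | e w i) phi w.
Proof.
pose inner w u := if e w u then phi w - phi u else 0.
have split_row w : w \in branch b -> \sum_(u | e w u) (phi w - phi u) =
    \sum_(u in branch b) inner w u + (if e w i then phi w else 0).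
  move=> wC; rewrite big_mkcond (bigID (mem (branch b))) /=; congr (_ + _).
  rewrite (bigD1 i) ?inE ?eqxx //= big1 ?addr0; first by rewrite phi_spec.1 subr0.
  move=> u /andP [uC ui]; case ewu: (e w u) => //.
  by move: uC; rewrite (branch_closed wC ewu ui).
have inner_antisym : \sum_(w in branch b) \sum_(u in branch b) inner w u = 0.
  set X := (X in X = 0); suff : X = - X by lra.
  rewrite {1}/X exchange_big /= -sumrN; apply: eq_bigr => u _.
  rewrite -sumrN; apply: eq_bigr => w _; rewrite /inner e_sym.
  by case: (e u w); rewrite ?opprB ?oppr0.
by rewrite (eq_bigr _ split_row) big_split /= inner_antisym add0r -big_mkcondr.
Qed.

Lemma branch_eigenvalue_pos (b : V) (lam : R) : b != i ->
  (forall w, w \in branch b ->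
     \sum_(u in branch b) laplacian e R w u * phi u = lam * phi w) ->
  0 < lam.
Proof.
move=> bi eigen; have phi_pos := (phi_spec.2 b bi).1.
have [c eci bc] := branch_meets_root bi.
have cC : c \in branch b.
  by rewrite inE bc andbT; apply: contraTneq eci => ->; rewrite e_irr.
have mass_pos : 0 < \sum_(w in branch b) phi w.
  apply: (sumr_gt0_witness _ (branch_self bi)); last exact: phi_pos (branch_self bi).
  by move=> w /phi_pos/ltW.
have mass_eq : lam * \sum_(w in branch b) phi w = \sum_(w in branch b | e w i) phi w.
  rewrite mulr_sumr -branch_flux; apply: eq_bigr => w wC.
  by rewrite -(@laplacian_row b) // eigen.
rewrite -(pmulr_lgt0 _ mass_pos) mass_eq.
apply: (sumr_gt0_witness (c := c)); last exact: phi_pos.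
- by move=> w /andP [/phi_pos/ltW].
- by rewrite cC eci.
Qed.

Lemma phi_increases (a b : V) : e a b -> dist b = (dist a).+1 -> phi a < phi b.
Proof.
have [n] := ubnP (farther b); elim: n a b => // n IHn a b fb_lt eab db.
have bi : b != i by rewrite -dist_eq0 db.
have [phi_pos [lam [_ eigen]]] := phi_spec.2 b bi.
have lam_pos := branch_eigenvalue_pos bi eigen.
have row := eigen b (branch_self bi); rewrite laplacian_row ?branch_self // in row.
have eba : e b a by rewrite e_sym.
have children_le : \sum_(u | e b u && (u != a)) (phi b - phi u) <= 0.
  apply: sumr_le0 => u /andP [ebu ua]; rewrite subr_le0.
  case: (edge_dist_cases ebu) => du.
    apply/ltW/(IHn b u _ ebu du).
    by apply: leq_trans (farther_child du) _.
  have ua' : u = a by apply: (parent_unique bi) => //; [rewrite du | rewrite db].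
  by rewrite ua' eqxx in ua.
rewrite (bigD1 a) //= in row.
have := mulr_gt0 lam_pos (phi_pos b (branch_self bi)); lra.
Qed.

Lemma descent_step (v y : V) : v != i -> e v y ->
  (forall z, e v z -> phi y <= phi z) -> dist y = (dist v).-1.
Proof.
move=> vi evy y_min; case: (edge_dist_cases evy) => [dy | -> //].
have [p evp dp] := parent_exists vi.
have dv_pos : (0 < dist v)%N by rewrite lt0n dist_eq0.
have p_lt_v : phi p < phi v by apply: phi_increases; [rewrite e_sym | lia].
have := lt_le_trans (lt_trans p_lt_v (phi_increases evy dy)) (y_min p evp).
by rewrite ltxx.
Qed.

End Tree.

Theorem theorem2 (R : realType) (V : finType) (e : rel V) (i : V) (phi : V -> R) :
  is_tree e -> is_phi e i phi ->
  forall (j : V) (x : nat -> V), is_descent e phi i j x ->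
    exists n : nat, [/\ is_dist e j i n, x n = i &
                        forall k : nat, (k < n)%N -> x k != i].
Proof.
move=> [[e_sym e_irr] e_conn e_acyc] phi_spec j x [x0 x_step].
pose n := dist i e_conn j.
have dist_x k : (k <= n)%N -> dist i e_conn (x k) = (n - k)%N.
  elim: k => [|k IHk] k_le; first by rewrite x0 subn0.
  have xk_i : x k != i.
    by rewrite -(dist_eq0 i e_conn) IHk ?(ltnW k_le) // subn_eq0 -ltnNge.
  have [exk xk_min] := x_step k xk_i.
  rewrite (descent_step e_sym e_irr e_conn e_acyc phi_spec xk_i exk xk_min).
  by rewrite IHk ?(ltnW k_le) // subnS.
exists n; split; first exact: dist_is_dist.
  by apply/eqP; rewrite -(dist_eq0 i e_conn) dist_x ?subnn.
move=> k k_lt; rewrite -(dist_eq0 i e_conn) dist_x ?(ltnW k_lt) //.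
by rewrite subn_eq0 -ltnNge.
Qed.
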